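(* Let $1<p<\infty$, $\frac1p+\frac1q=1$, let $a,b$ be as in the context, and let $w=(w_n)_{n\ge0}$ be nonzero complex numbers with $$\sup_{n\ge0}\Big|\frac{w_na_n}{a_{n+1}}\Big|<\infty\quad\text{and}\quad\limsup_{n\to\infty}\Big|\frac{b_n}{a_{n+1}}\Big|<1 .$$ Identify $(\ell^p_{a,b})^*$ with $\ell^q(\mathbb{N}_0)$ via $L\mapsto(L(f_n))_{n\ge0}$. Then the following are equivalent: (i) $F_w^*$ is not hypercyclic on $(\ell^p_{a,b})^*$; (ii) for every $L\in(\ell^p_{a,b})^*$ (equivalently every $u\in\ell^q(\mathbb{N}_0)$) the sequence $\big((F_w^* )^\nu L\big)(f_n)=L(F_w^\nu f_n)$, i.e. the image of $u$ under the $\nu$-th power of the matrix of $F_w^*$ with respect to $\{f_n^*\}$, tends to $0$ in $\mathbb{C}^{\mathbb{N}_0}$ (coordinatewise) as $\nu\to\infty$; that is, $L(F_w^\nu f_n)\to0$ as $\nu\to\infty$ for every $n\ge0$.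
   Context: Let $a=(a_n)_{n\ge0}$, $b=(b_n)_{n\ge0}$ be sequences of nonzero complex numbers with $\limsup_{n\to\infty}(|a_n|+|b_n|)^{1/n}<\infty$, and let $R=1/\limsup_{n}(|a_n|+|b_n|)^{1/n}\in(0,\infty]$. For $n\ge0$ let $f_n(z)=(a_n+b_nz)z^n$. For $1\le p<\infty$, $\ell^p_{a,b}$ is the space of analytic functions on $\{|z|<R\}$ of the form $f=\sum_{n\ge0}\lambda_nf_n$ with $(\lambda_n)\in\ell^p(\mathbb{N}_0)$ (the series converges locally uniformly on $\{|z|<R\}$ and the $\lambda_n$ are uniquely determined by $f$), normed by $\|f\|=(\sum_n|\lambda_n|^p)^{1/p}$. $f_n^*$ are the coordinate functionals $f_n^*(\sum_j\lambda_jf_j)=\lambda_n$. The weighted forward shift is $F_w\big(\sum_{n\ge0}\mu_nz^n\big)=\sum_{n\ge0}\mu_nw_nz^{n+1}$ (bounded on $\ell^p_{a,b}$ under the hypotheses); $F_w^*$ is its adjoint. $\mathbb{C}^{\mathbb{N}_0}$ carries the topology of coordinatewise convergence. Hypercyclic means having a dense orbit. *)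

From Stdlib Require Import Reals.
From Coquelicot Require Import Coquelicot.

Open Scope C_scope.

(* |x|^r for x >= 0, with the convention 0^r = 0 (r > 0) *)
Definition rpow (x r : R) : R :=
  match Rlt_dec 0 x with left _ => Rpower x r | right _ => 0%R end.

Definition Cseries (s : nat -> C) : C :=
  (Series (fun k => Re (s k)), Series (fun k => Im (s k))).

Definition in_lq (q : R) (u : nat -> C) : Prop :=
  ex_series (fun n => rpow (Cmod (u n)) q).
Definition lq_norm (q : R) (u : nat -> C) : R :=
  rpow (Series (fun n => rpow (Cmod (u n)) q)) (/ q).

(* An element f = sum_n lam_n f_n of ell^p_{a,b}, f_n = (a_n + b_n z) z^n,
   is represented by its coordinate sequence lam.  Its Taylor coefficients: *)
Definition taylor (a b : nat -> C) (lam : nat -> C) (m : nat) : C :=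
  a m * lam m + match m with O => 0 | S m' => b m' * lam m' end.

Definition Fw_taylor (w : nat -> C) (mu : nat -> C) (m : nat) : C :=
  match m with O => 0 | S m' => w m' * mu m' end.

(* recover the (unique) coordinates lam from Taylor coefficients nu, i.e. the
   solution of nu_m = a_m lam_m + b_(m-1) lam_(m-1) *)
Fixpoint coord (a b : nat -> C) (nu : nat -> C) (m : nat) : C :=
  match m with
  | O => nu O / a O
  | S m' => (nu (S m') - b m' * coord a b nu m') / a (S m')
  end.

Definition Fw_coord (a b w : nat -> C) (lam : nat -> C) : nat -> C :=
  coord a b (Fw_taylor w (taylor a b lam)).

Definition unitvec (n : nat) : nat -> C :=
  fun k => if Nat.eqb k n then 1 else 0.

(* matrix of F_w^* w.r.t. {f_n^*}, acting on u = (L(f_k))_k in ell^q: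
   (F_w^* u)_n = L(F_w f_n) = sum_k u_k (F_w f_n)_k *)
Definition Fw_adj (a b w : nat -> C) (u : nat -> C) : nat -> C :=
  fun n => Cseries (fun k => u k * Fw_coord a b w (unitvec n) k).

Definition hypercyclic_lq (q : R) (T : (nat -> C) -> (nat -> C)) : Prop :=
  exists u, in_lq q u /\
    forall v, in_lq q v -> forall eps : R, (0 < eps)%R ->
      exists nu : nat, in_lq q (Nat.iter nu T u) /\
        (lq_norm q (fun n => (Nat.iter nu T u n - v n)%C) < eps)%R.

(* Put [beta_k = b_(k-1) / a_k] and [om_m = w_m a_m / a_(m+1)].  Describe a functional L on
   ℓ^p_{a,b} by [y_m = a_m L(z^m)]: then [L(f_k) = y_k + beta_(k+1) y_(k+1)], and [L o F_w]
   is described by the backward weighted shift [(B y)_m = om_m y_(m+1)].  Because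
   [limsup |beta_k| < 1], every null sequence arises in this way from a null sequence [y]
   (a Neumann series), so the orbits of [F_w^*] on ℓ^q are images of orbits of [B], and
   the dichotomy of Salas for weighted shifts decides the question.
   If the products [om_0 ... om_(m-1)] are bounded, the [n]-th coordinate of [B^nu y] is
   at most [C_n (|y_(n+nu)| + |y_(n+1+nu)|)], so every orbit tends to 0 coordinatewise.
   If they are unbounded, a hypercyclic vector is assembled from a countable dense family
   of finitely supported vectors: the [i]-th one is pulled back through [B] into a block of
   its own, placed so far out that the weight products leading to it from any earlier
   block are huge; then a suitable [B^s y] is within [2^-k] of the [k]-th vector, all
   other blocks being small.
   Conversely, an orbit whose first coordinate tends to 0 cannot approach a vector with a
   large first coordinate, so it is not dense. *)

From Stdlib Require Import Reals Lra Lia ZArith FunctionalExtensionality Cantor IndefiniteDescription Classical.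
From Coquelicot Require Import Coquelicot.
Open Scope R_scope.

Lemma rpow_nonneg x r : 0 <= rpow x r.
Proof. unfold rpow; destruct (Rlt_dec 0 x); [left; apply exp_pos | lra]. Qed.

Lemma rpow_0_l r : rpow 0 r = 0.
Proof. unfold rpow; destruct (Rlt_dec 0 0); lra. Qed.

Lemma rpow_pos x r : 0 < x -> 0 < rpow x r.
Proof. intros; unfold rpow; destruct (Rlt_dec 0 x); [apply exp_pos | lra]. Qed.

Lemma rpow_Rpower x r : 0 < x -> rpow x r = Rpower x r.
Proof. intros; unfold rpow; destruct (Rlt_dec 0 x); lra. Qed.

Lemma rpow_le_compat x y r : 0 <= r -> 0 <= x <= y -> rpow x r <= rpow y r.
Proof.
  intros hr [[hx|<-] hxy].
  - rewrite !rpow_Rpower by lra. apply Rle_Rpower_l; lra.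
  - rewrite rpow_0_l. apply rpow_nonneg.
Qed.

Lemma rpow_lt_compat x y r : 0 < r -> 0 <= x < y -> rpow x r < rpow y r.
Proof.
  intros hr [[hx|<-] hxy].
  - rewrite !rpow_Rpower by lra. apply Rlt_Rpower_l; lra.
  - rewrite rpow_0_l. apply rpow_pos; lra.
Qed.

Lemma rpow_mult_distr x y r : 0 <= x -> 0 <= y -> rpow (x * y) r = rpow x r * rpow y r.
Proof.
  intros [hx|<-] [hy|<-]; rewrite ?Rmult_0_l, ?Rmult_0_r, ?rpow_0_l; try ring.
  rewrite !rpow_Rpower by (try apply Rmult_lt_0_compat; lra).
  symmetry; apply Rpower_mult_distr; auto.
Qed.

Lemma rpow_rpow_inv x r : r <> 0 -> 0 <= x -> rpow (rpow x r) (/ r) = x.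
Proof.
  intros hr [hx|<-]; [|rewrite !rpow_0_l; auto].
  rewrite (rpow_Rpower x), rpow_Rpower by (try apply exp_pos; lra).
  rewrite Rpower_mult, Rinv_r by auto. apply Rpower_1; auto.
Qed.

Lemma rpow_inv_rpow x r : r <> 0 -> 0 <= x -> rpow (rpow x (/ r)) r = x.
Proof.
  intros hr hx. rewrite <- (Rinv_inv r) at 2.
  apply rpow_rpow_inv; auto. apply Rinv_neq_0_compat; auto.
Qed.

Lemma Cmod_plus_le_2max (x y : C) : Cmod (x + y) <= 2 * Rmax (Cmod x) (Cmod y).
Proof.
  pose proof (Cmod_triangle x y). pose proof (Rmax_l (Cmod x) (Cmod y)).
  pose proof (Rmax_r (Cmod x) (Cmod y)). lra.
Qed.

Lemma rpow_Cmod_plus_le x y q : 0 <= q ->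
  rpow (Cmod (x + y)) q <= rpow 2 q * (rpow (Cmod x) q + rpow (Cmod y) q).
Proof.
  intros hq.
  assert (hmax : 0 <= Rmax (Cmod x) (Cmod y))
    by (eapply Rle_trans; [apply Cmod_ge_0 | apply Rmax_l]).
  eapply Rle_trans.
  { apply rpow_le_compat; auto. split; [apply Cmod_ge_0 | apply Cmod_plus_le_2max]. }
  rewrite rpow_mult_distr by lra.
  apply Rmult_le_compat_l; [apply rpow_nonneg|].
  pose proof (rpow_nonneg (Cmod x) q). pose proof (rpow_nonneg (Cmod y) q).
  unfold Rmax; destruct (Rle_dec (Cmod x) (Cmod y)); lra.
Qed.

Lemma Cmod_le_2max_Re_Im (z : C) : Cmod z <= 2 * Rmax (Rabs (Re z)) (Rabs (Im z)).
Proof.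
  eapply Rle_trans; [apply Cmod_2Rmax|].
  assert (sqrt 2 <= 2) by (rewrite <- (sqrt_square 2) at 2 by lra; apply sqrt_le_1_alt; lra).
  assert (0 <= Rmax (Rabs (fst z)) (Rabs (snd z)))
    by (eapply Rle_trans; [apply Rabs_pos | apply Rmax_l]).
  apply Rmult_le_compat_r; auto.
Qed.

Lemma Im_le_Cmod (z : C) : Rabs (Im z) <= Cmod z.
Proof. eapply Rle_trans; [apply Rmax_r | apply Rmax_Cmod]. Qed.

Lemma ex_series_Rscal_l (f : nat -> R) c : ex_series f -> ex_series (fun n => c * f n).
Proof.
  intro h. apply ex_series_ext with (fun n => f n * c); [intro; apply Rmult_comm|].
  apply ex_series_scal_r; auto.
Qed.

Lemma ex_series_Rplus (f g : nat -> R) :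
  ex_series f -> ex_series g -> ex_series (fun n => f n + g n).
Proof. exact (ex_series_plus (V := R_NormedModule) f g). Qed.

Lemma ex_series_finite_support (f : nat -> R) N :
  (forall k, (N <= k)%nat -> f k = 0) -> ex_series f.
Proof.
  intros h. apply (ex_series_incr_n (V := R_NormedModule) f N).
  apply ex_series_ext with (fun _ => 0); [intro k; rewrite h by lia; auto|].
  exists 0. change (is_lim_seq (sum_n (fun _ : nat => 0)) 0).
  apply is_lim_seq_ext with (fun _ => 0); [|apply is_lim_seq_const].
  intro n. rewrite sum_n_const. simpl; ring.
Qed.

Lemma Series_nonneg (f : nat -> R) : (forall n, 0 <= f n) -> ex_series f -> 0 <= Series f.
Proof.
  intros h hf. replace 0 with (Series (fun n => 0 * f n)) by (rewrite Series_scal_l; ring).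
  apply Series_le; auto. intro n. rewrite Rmult_0_l. split; [lra | auto].
Qed.

Lemma sum_n_nonneg (f : nat -> R) N : (forall m, 0 <= f m) -> 0 <= sum_n f N.
Proof.
  intros h. induction N; [rewrite sum_O; auto|].
  rewrite sum_Sn. specialize (h (S N)). change plus with Rplus. lra.
Qed.

Lemma sum_n_le_compat (f g : nat -> R) N : (forall m, f m <= g m) -> sum_n f N <= sum_n g N.
Proof.
  intros h. induction N; [rewrite !sum_O; auto|].
  rewrite !sum_Sn. specialize (h (S N)). change plus with Rplus. lra.
Qed.

Lemma sum_n_ge_term (f : nat -> R) N j :
  (forall k, 0 <= f k) -> (j <= N)%nat -> f j <= sum_n f N.
Proof.
  intros hf hj. induction hj.
  - destruct j; [rewrite sum_O; lra|].
    rewrite sum_Sn. pose proof (sum_n_nonneg f j hf). change plus with Rplus. lra.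
  - rewrite sum_Sn. specialize (hf (S m)). change plus with Rplus. lra.
Qed.

Lemma bounded_of_eventually_bounded (f : nat -> R) N B :
  (forall n, 0 <= f n) -> (forall n, (N <= n)%nat -> f n <= B) ->
  exists C, 0 <= C /\ forall n, f n <= C.
Proof.
  intros hf hB. pose proof (sum_n_nonneg f N hf).
  assert (0 <= B) by (apply Rle_trans with (f N); auto).
  exists (B + sum_n f N). split; [lra|]. intro n.
  destruct (Nat.le_gt_cases N n) as [h|h].
  - specialize (hB n h). lra.
  - pose proof (sum_n_ge_term f N n hf ltac:(lia)). lra.
Qed.

Lemma ex_series_nonneg_bounded (f : nat -> R) B :
  (forall n, 0 <= f n) -> (forall N, sum_n f N <= B) -> ex_series f /\ Series f <= B.
Proof.
  intros hpos hB.
  assert (hinc : forall n, sum_n f n <= sum_n f (S n)).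
  { intro n. rewrite sum_Sn. specialize (hpos (S n)). change plus with Rplus. lra. }
  destruct (ex_finite_lim_seq_incr _ _ hinc hB) as [l hl].
  split; [exists l; exact hl|].
  rewrite (is_series_unique f l hl).
  exact (is_lim_seq_le (sum_n f) (fun _ => B) l B hB hl (is_lim_seq_const B)).
Qed.

Lemma ex_series_le_compat (f g : nat -> R) :
  (forall n, 0 <= f n <= g n) -> ex_series g -> ex_series f /\ Series f <= Series g.
Proof.
  intros h hg. split; [|apply Series_le; auto].
  apply (ex_series_le f g); auto. intro n. destruct (h n).
  change (Rabs (f n) <= g n). rewrite Rabs_pos_eq; lra.
Qed.

Lemma Series_finite_support_le (f : nat -> R) N B :
  (forall j, (N <= j)%nat -> f j = 0) -> (forall j, 0 <= f j <= B) ->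
  ex_series f /\ Series f <= INR N * B.
Proof.
  intros h0 hb. apply ex_series_nonneg_bounded; [intro; apply hb|].
  assert (hB : 0 <= B) by (destruct (hb 0%nat); lra).
  assert (hsum : forall L, sum_n f L <= INR (Nat.min (S L) N) * B).
  { induction L.
    - rewrite sum_O. destruct N; simpl Nat.min; [rewrite h0 by lia; simpl; lra|].
      destruct (hb 0%nat); simpl; lra.
    - rewrite sum_Sn. change plus with Rplus. destruct (Nat.lt_ge_cases (S L) N).
      + rewrite Nat.min_l in * by lia. rewrite (S_INR (S L)). destruct (hb (S L)). lra.
      + rewrite h0 by lia. rewrite Nat.min_r in * by lia. lra. }
  intro L. eapply Rle_trans; [apply hsum|].
  apply Rmult_le_compat_r; auto. apply le_INR. lia.
Qed.

(** * The spaces ℓ^q and c_0 *)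

Definition lq_sum (q : R) (x : nat -> C) : R := Series (fun n => rpow (Cmod (x n)) q).

Definition in_c0 (y : nat -> C) : Prop :=
  forall eps, 0 < eps -> exists N, forall n, (N <= n)%nat -> Cmod (y n) < eps.

Lemma in_c0_bounded (y : nat -> C) : in_c0 y -> exists B, 0 <= B /\ forall m, Cmod (y m) <= B.
Proof.
  intros h. destruct (h 1 Rlt_0_1) as [N hN].
  apply (bounded_of_eventually_bounded (fun m => Cmod (y m)) N 1); [intro; apply Cmod_ge_0|].
  intros n hn. left; auto.
Qed.

Section Lq.

Variable q : R.
Hypothesis hq : 0 < q.

Lemma lq_sum_nonneg x : in_lq q x -> 0 <= lq_sum q x.
Proof. apply Series_nonneg. intro; apply rpow_nonneg. Qed.

Lemma in_lq_finite_support (x : nat -> C) N : (forall n, (N <= n)%nat -> x n = 0%C) -> in_lq q x.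
Proof.
  intro h. apply ex_series_finite_support with N.
  intros n hn. rewrite h, Cmod_0 by auto. apply rpow_0_l.
Qed.

Lemma in_lq_dominated (x y : nat -> C) c : 0 <= c ->
  (forall n, Cmod (x n) <= c * Cmod (y n)) -> in_lq q y ->
  in_lq q x /\ lq_sum q x <= rpow c q * lq_sum q y.
Proof.
  intros hc h hy. unfold lq_sum. rewrite <- Series_scal_l.
  apply ex_series_le_compat; [|apply ex_series_Rscal_l, hy].
  intro n. split; [apply rpow_nonneg|].
  rewrite <- rpow_mult_distr by (auto; apply Cmod_ge_0).
  apply rpow_le_compat; [lra|]. split; [apply Cmod_ge_0 | auto].
Qed.

Lemma in_lq_plus (x y : nat -> C) : in_lq q x -> in_lq q y ->
  in_lq q (fun n => x n + y n)%C /\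
  lq_sum q (fun n => x n + y n)%C <= rpow 2 q * (lq_sum q x + lq_sum q y).
Proof.
  intros hx hy. unfold lq_sum. rewrite <- Series_plus, <- Series_scal_l by auto.
  apply ex_series_le_compat; [|apply ex_series_Rscal_l, ex_series_Rplus; auto].
  intro n. split; [apply rpow_nonneg | apply rpow_Cmod_plus_le; lra].
Qed.

Lemma in_lq_minus (x y : nat -> C) : in_lq q x -> in_lq q y ->
  in_lq q (fun n => x n - y n)%C /\
  lq_sum q (fun n => x n - y n)%C <= rpow 2 q * (lq_sum q x + lq_sum q y).
Proof.
  intros hx hy.
  assert (hopp : forall n, rpow (Cmod (- y n)) q = rpow (Cmod (y n)) q)
    by (intro; rewrite Cmod_opp; auto).
  assert (hy' : in_lq q (fun n => - y n)%C) by (eapply ex_series_ext; [|exact hy]; auto).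
  replace (lq_sum q y) with (lq_sum q (fun n => - y n)%C) by (apply Series_ext; auto).
  exact (in_lq_plus x _ hx hy').
Qed.

Lemma in_lq_shift (x : nat -> C) : in_lq q x ->
  in_lq q (fun n => x (S n)) /\ lq_sum q (fun n => x (S n)) <= lq_sum q x.
Proof.
  intros hx. split; [exact (proj1 (ex_series_incr_1 (V := R_NormedModule) _) hx)|].
  unfold lq_sum. rewrite (Series_incr_1 (fun n => rpow (Cmod (x n)) q)) by auto.
  pose proof (rpow_nonneg (Cmod (x 0%nat)) q). lra.
Qed.

Lemma in_lq_in_c0 (x : nat -> C) : in_lq q x -> in_c0 x.
Proof.
  intros hx eps he.
  destruct (ex_series_lim_0 _ hx (fun t => Rabs t < rpow eps q)) as [N hN].
  { exists (mkposreal _ (rpow_pos eps q he)). intros t ht. change (Rabs (t - 0) < rpow eps q) in ht.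
    rewrite Rminus_0_r in ht. exact ht. }
  exists N. intros n hn. specialize (hN n hn). simpl in hN.
  rewrite Rabs_pos_eq in hN by apply rpow_nonneg.
  destruct (Rlt_le_dec (Cmod (x n)) eps) as [h|h]; auto.
  assert (rpow eps q <= rpow (Cmod (x n)) q) by (apply rpow_le_compat; lra). lra.
Qed.

Lemma rpow_Cmod_le_lq_sum (x : nat -> C) n : in_lq q x -> rpow (Cmod (x n)) q <= lq_sum q x.
Proof.
  intros hx. unfold lq_sum.
  rewrite (Series_incr_n _ (S n)) by (auto; lia). simpl pred. rewrite <- sum_n_Reals.
  pose proof (sum_n_ge_term (fun n => rpow (Cmod (x n)) q) n n (fun _ => rpow_nonneg _ _) (le_n n)).
  pose proof (Series_nonneg (fun k => rpow (Cmod (x (S n + k)%nat)) q) (fun _ => rpow_nonneg _ _)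
                (proj1 (ex_series_incr_n (V := R_NormedModule) _ (S n)) hx)).
  lra.
Qed.

Lemma Cmod_le_lq_norm (x : nat -> C) n : in_lq q x -> Cmod (x n) <= lq_norm q x.
Proof.
  intros hx. unfold lq_norm. fold (lq_sum q x).
  rewrite <- (rpow_rpow_inv (Cmod (x n)) q) by (try lra; apply Cmod_ge_0).
  apply rpow_le_compat; [left; apply Rinv_0_lt_compat; auto|].
  split; [apply rpow_nonneg | apply rpow_Cmod_le_lq_sum; auto].
Qed.

Lemma lq_norm_lt (x : nat -> C) eps : 0 < eps -> in_lq q x ->
  lq_sum q x < rpow eps q -> lq_norm q x < eps.
Proof.
  intros he hx hs. unfold lq_norm. fold (lq_sum q x).
  rewrite <- (rpow_rpow_inv eps q) by lra.
  apply rpow_lt_compat; [apply Rinv_0_lt_compat; auto|]. split; auto. apply lq_sum_nonneg; auto.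
Qed.

Definition truncate (v : nat -> C) N j : C := if Nat.ltb j N then v j else 0%C.

Lemma lq_sum_tail_small (v : nat -> C) eta : in_lq q v -> 0 < eta ->
  exists N, lq_sum q (fun j => truncate v N j - v j)%C < eta.
Proof.
  intros hv he. set (f := fun j => rpow (Cmod (v j)) q).
  assert (hs : is_lim_seq (sum_n f) (Series f)) by exact (Series_correct _ hv).
  apply is_lim_seq_spec in hs. destruct (hs (mkposreal eta he)) as [N hN]. simpl in hN.
  exists (S N). unfold lq_sum.
  rewrite (Series_ext _ (fun j => if Nat.ltb j (S N) then 0 else f j)).
  2:{ intro j. unfold truncate, f. destruct (Nat.ltb_spec j (S N)).
      - replace (v j - v j)%C with (RtoC 0) by ring. rewrite Cmod_0. apply rpow_0_l.
      - replace (RtoC 0 - v j)%C with (- v j)%C by ring. rewrite Cmod_opp. auto. }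
  rewrite (Series_incr_n_aux _ (S N)) by (intros k hk; destruct (Nat.ltb_spec k (S N)); [auto | lia]).
  rewrite (Series_ext _ (fun k => f (S N + k)%nat))
    by (intro k; destruct (Nat.ltb_spec (S N + k) (S N)); [lia | auto]).
  pose proof (Series_incr_n f (S N) ltac:(lia) hv) as e. simpl pred in e. rewrite <- sum_n_Reals in e.
  specialize (hN N (le_n _)). rewrite Rabs_minus_sym in hN. apply Rabs_lt_between in hN. lra.
Qed.

Lemma lq_sum_plus_lt (x y : nat -> C) eta : in_lq q x -> in_lq q y ->
  lq_sum q x < eta / (2 * rpow 2 q) -> lq_sum q y < eta / (2 * rpow 2 q) ->
  in_lq q (fun n => x n + y n)%C /\ lq_sum q (fun n => x n + y n)%C < eta.
Proof.
  intros hx hy h1 h2. destruct (in_lq_plus x y hx hy) as [hxy hle].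
  split; auto. assert (h2q : 0 < rpow 2 q) by (apply rpow_pos; lra).
  eapply Rle_lt_trans; [exact hle|].
  replace eta with (rpow 2 q * (eta / (2 * rpow 2 q) + eta / (2 * rpow 2 q))) by (field; lra).
  apply Rmult_lt_compat_l; lra.
Qed.

End Lq.

Definition ex_Cseries (s : nat -> C) : Prop :=
  ex_series (fun k => Re (s k)) /\ ex_series (fun k => Im (s k)).

Lemma Re_sum_n (s : nat -> C) N : Re (sum_n s N) = sum_n (fun k => Re (s k)) N.
Proof. induction N; [rewrite !sum_O | rewrite !sum_Sn, <- IHN]; reflexivity. Qed.

Lemma Im_sum_n (s : nat -> C) N : Im (sum_n s N) = sum_n (fun k => Im (s k)) N.
Proof. induction N; [rewrite !sum_O | rewrite !sum_Sn, <- IHN]; reflexivity. Qed.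

Lemma is_lim_seq_of_remainder (x e : nat -> R) l N0 :
  (forall N, (N0 <= N)%nat -> x N = l + e N) ->
  (forall eps, 0 < eps -> exists N, forall n, (N <= n)%nat -> Rabs (e n) < eps) ->
  is_lim_seq x l.
Proof.
  intros hx he. apply is_lim_seq_spec. intro eps.
  destruct (he eps (cond_pos eps)) as [N1 hN1]. exists (N0 + N1)%nat. intros N hN.
  rewrite hx by lia. replace (l + e N - l) with (e N) by ring. apply hN1; lia.
Qed.

(* Equations between [sum_n]s are stated [@eq C] so that [ring] sees the field [C]. *)
Lemma Cseries_of_remainder (s rem : nat -> C) (L : C) N0 :
  (forall N, (N0 <= N)%nat -> @eq C (sum_n s N) (L + rem N)%C) -> in_c0 rem -> Cseries s = L.
Proof.
  intros hs hrem. unfold Cseries. destruct L as [l1 l2]. f_equal; apply is_series_unique.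
  - apply (is_lim_seq_of_remainder _ (fun N => Re (rem N)) l1 N0).
    + intros N hN. rewrite <- Re_sum_n, hs by auto. reflexivity.
    + intros eps he. destruct (hrem eps he) as [N hN]. exists N. intros n hn.
      eapply Rle_lt_trans; [apply re_le_Cmod | auto].
  - apply (is_lim_seq_of_remainder _ (fun N => Im (rem N)) l2 N0).
    + intros N hN. rewrite <- Im_sum_n, hs by auto. reflexivity.
    + intros eps he. destruct (hrem eps he) as [N hN]. exists N. intros n hn.
      eapply Rle_lt_trans; [apply Im_le_Cmod | auto].
Qed.

Lemma Cseries_ext (s t : nat -> C) : (forall j, s j = t j) -> Cseries s = Cseries t.
Proof. intro h. unfold Cseries. f_equal; apply Series_ext; intro; rewrite h; auto. Qed.

Lemma Cseries_incr_1 (s : nat -> C) : ex_Cseries s ->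
  Cseries s = (s 0%nat + Cseries (fun j => s (S j)))%C.
Proof.
  intros [h1 h2]. unfold Cseries.
  rewrite (Series_incr_1 (fun j => Re (s j))), (Series_incr_1 (fun j => Im (s j))) by auto.
  destruct (s 0%nat). reflexivity.
Qed.

Lemma Cseries_scal_l (s : nat -> C) (c : C) : ex_Cseries s ->
  Cseries (fun j => c * s j)%C = (c * Cseries s)%C.
Proof.
  intros [h1 h2]. unfold Cseries. destruct c as [c1 c2]. simpl.
  change (fun k => c1 * fst (s k) - c2 * snd (s k)) with (fun k => c1 * Re (s k) - c2 * Im (s k)).
  change (fun k => c1 * snd (s k) + c2 * fst (s k)) with (fun k => c1 * Im (s k) + c2 * Re (s k)).
  rewrite Series_minus, Series_plus, !Series_scal_l by (apply ex_series_Rscal_l; auto).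
  unfold Cmult; simpl. f_equal; ring.
Qed.

Section GeometricDomination.

Variables (s : nat -> C) (r B : R).
Hypothesis hr : 0 <= r < 1.
Hypothesis hs : forall j, Cmod (s j) <= r ^ j * B.

Let ex_series_geom_bound : ex_series (fun j => r ^ j * B).
Proof. apply ex_series_scal_r, ex_series_geom. rewrite Rabs_pos_eq; lra. Qed.

Lemma ex_Cseries_geom_dominated : ex_Cseries s.
Proof.
  split.
  - apply (ex_series_le (fun j => Re (s j)) (fun j => r ^ j * B)); auto. intro j.
    change norm with Rabs. eapply Rle_trans; [apply re_le_Cmod | auto].
  - apply (ex_series_le (fun j => Im (s j)) (fun j => r ^ j * B)); auto. intro j.
    change norm with Rabs. eapply Rle_trans; [apply Im_le_Cmod | auto].
Qed.

Let Series_component_le (f : C -> R) : (forall z, Rabs (f z) <= Cmod z) ->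
  Rabs (Series (fun j => f (s j))) <= B / (1 - r).
Proof.
  intros hf.
  assert (ha : ex_series (fun j => Rabs (f (s j)))).
  { apply (ex_series_le (fun j => Rabs (f (s j))) (fun j => r ^ j * B)); auto. intro j. change norm with Rabs.
    rewrite Rabs_Rabsolu. eapply Rle_trans; [apply hf | auto]. }
  eapply Rle_trans; [apply Series_Rabs; auto|].
  eapply Rle_trans; [apply Series_le with (b := fun j => r ^ j * B); auto|].
  - intro j; split; [apply Rabs_pos | eapply Rle_trans; [apply hf | auto]].
  - rewrite Series_scal_r, Series_geom by (rewrite Rabs_pos_eq; lra). unfold Rdiv. lra.
Qed.

Lemma Cmod_Cseries_le_geom : Cmod (Cseries s) <= 2 * (B / (1 - r)).
Proof.
  eapply Rle_trans; [apply Cmod_le_2max_Re_Im|]. apply Rmult_le_compat_l; [lra|].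
  apply Rmax_lub; apply Series_component_le; [apply re_le_Cmod | apply Im_le_Cmod].
Qed.

End GeometricDomination.

(** * Conjugating [F_w^*] to a backward weighted shift *)

Definition beta (a b : nat -> C) (k : nat) : C :=
  match k with O => 0%C | S k' => (b k' / a k)%C end.

Definition shift_weight (a w : nat -> C) (m : nat) : C := (w m * a m / a (S m))%C.

Definition bshift (a w : nat -> C) (y : nat -> C) (m : nat) : C := (shift_weight a w m * y (S m))%C.

(* A functional with [L(z^m) = y_m / a_m] has [L(f_k) = dual_coords y k], and [L o F_w]
   has [(L o F_w)(z^m) = bshift y m / a_m]. *)
Definition dual_coords (a b : nat -> C) (y : nat -> C) (k : nat) : C :=
  (y k + beta a b (S k) * y (S k))%C.

Definition Fw_f (a b w : nat -> C) (n : nat) : nat -> C := Fw_coord a b w (unitvec n).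

Definition Fw_f_taylor (a b w : nat -> C) (n m : nat) : C :=
  (Fw_taylor w (taylor a b (unitvec n)) m / a m)%C.

Lemma taylor_unitvec (a b : nat -> C) n m :
  taylor a b (unitvec n) m =
  (if Nat.eqb m n then a n else if Nat.eqb m (S n) then b n else 0)%C.
Proof.
  unfold taylor, unitvec. destruct m as [|m].
  - destruct (Nat.eqb_spec 0 n), (Nat.eqb_spec 0 (S n)); subst; try lia; ring.
  - destruct (Nat.eqb_spec (S m) n), (Nat.eqb_spec m n), (Nat.eqb_spec (S m) (S n));
      subst; try lia; ring.
Qed.

Lemma Fw_f_taylor_val (a b w : nat -> C) n m :
  Fw_f_taylor a b w n m =
  (if Nat.eqb m (S n) then shift_weight a w n
   else if Nat.eqb m (S (S n)) then w (S n) * b n / a (S (S n)) else 0)%C.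
Proof.
  unfold Fw_f_taylor, Fw_taylor, shift_weight. destruct m as [|m]; [simpl; unfold Cdiv; ring|].
  rewrite taylor_unitvec.
  destruct (Nat.eqb_spec m n), (Nat.eqb_spec (S m) (S n)), (Nat.eqb_spec m (S n)),
    (Nat.eqb_spec (S m) (S (S n))); subst; try lia; unfold Cdiv; ring.
Qed.

Section Conjugacy.

Variables a b w : nat -> C.
Hypothesis ha : forall k, a k <> 0%C.

Lemma Fw_f_S n m :
  Fw_f a b w n (S m) = (Fw_f_taylor a b w n (S m) - beta a b (S m) * Fw_f a b w n m)%C.
Proof.
  unfold Fw_f, Fw_f_taylor, Fw_coord. simpl coord at 1. unfold beta. cbn [Fw_taylor].
  field; apply ha.
Qed.

Lemma Fw_f_tail n m : (S (S n) <= m)%nat ->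
  Fw_f a b w n (S m) = (- beta a b (S m) * Fw_f a b w n m)%C.
Proof.
  intros hm. rewrite Fw_f_S, Fw_f_taylor_val.
  destruct (Nat.eqb_spec (S m) (S n)), (Nat.eqb_spec (S m) (S (S n))); try lia. ring.
Qed.

Hypothesis hbeta : exists K, forall k, (K <= k)%nat -> Cmod (beta a b k) <= 1.

Lemma Fw_f_bounded n : exists C0, 0 <= C0 /\ forall m, Cmod (Fw_f a b w n m) <= C0.
Proof.
  destruct hbeta as [K hK]. set (K1 := (K + S (S n))%nat).
  apply (bounded_of_eventually_bounded _ K1 (Cmod (Fw_f a b w n K1)));
    [intro; apply Cmod_ge_0|].
  intros m hm. replace m with (K1 + (m - K1))%nat by lia.
  induction (m - K1)%nat as [|d IHd]; [rewrite Nat.add_0_r; lra|].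
  rewrite Nat.add_succ_r, Fw_f_tail, Cmod_mult, Cmod_opp by lia.
  eapply Rle_trans; [|exact IHd].
  rewrite <- (Rmult_1_l (Cmod (Fw_f a b w n (K1 + d)))) at 2.
  apply Rmult_le_compat_r; [apply Cmod_ge_0 | apply hK; lia].
Qed.

(* Summation by parts: the [beta]-terms telescope. *)
Lemma sum_n_dual_coords_Fw_f (y : nat -> C) n N :
  @eq C (sum_n (fun k => dual_coords a b y k * Fw_f a b w n k)%C N)
  (sum_n (fun k => y k * Fw_f_taylor a b w n k) N
   + beta a b (S N) * y (S N) * Fw_f a b w n N)%C.
Proof.
  induction N.
  - rewrite !sum_O. unfold dual_coords. change (Fw_f a b w n 0) with (Fw_f_taylor a b w n 0). ring.
  - rewrite !sum_Sn, IHN. change plus with Cplus.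
    replace (Fw_f_taylor a b w n (S N))
      with (Fw_f a b w n (S N) + beta a b (S N) * Fw_f a b w n N)%C by (rewrite Fw_f_S; ring).
    unfold dual_coords. ring.
Qed.

Lemma sum_n_two_terms (g : nat -> C) i : (forall k, k <> i -> k <> S i -> g k = 0%C) ->
  forall N, (S i <= N)%nat -> @eq C (sum_n g N) (g i + g (S i))%C.
Proof.
  intros hg.
  assert (h0 : forall N, (N < i)%nat -> @eq C (sum_n g N) 0%C).
  { induction N; intro h; [rewrite sum_O; apply hg; lia|].
    rewrite sum_Sn, IHN, (hg (S N)) by lia. apply Cplus_0_l. }
  assert (h1 : sum_n g i = g i).
  { destruct i; [rewrite sum_O; auto|]. rewrite sum_Sn, h0 by lia. apply Cplus_0_l. }
  intros N hN. induction hN.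
  - rewrite sum_Sn, h1. reflexivity.
  - rewrite sum_Sn, IHhN, (hg (S m)) by lia. change plus with Cplus. ring.
Qed.

Lemma Fw_adj_dual_coords (y : nat -> C) n : in_c0 y ->
  Fw_adj a b w (dual_coords a b y) n = dual_coords a b (bshift a w y) n.
Proof.
  intros hy. unfold Fw_adj. fold (Fw_f a b w n).
  destruct (Fw_f_bounded n) as [C0 [hC0 hC]].
  apply (Cseries_of_remainder _ (fun N => - y (S N) * Fw_f a b w n (S N))%C _ (S (S n))).
  - intros N hN. rewrite sum_n_dual_coords_Fw_f.
    rewrite (sum_n_two_terms (fun k => y k * Fw_f_taylor a b w n k)%C (S n)); auto.
    + rewrite (Fw_f_tail n N), !Fw_f_taylor_val, !Nat.eqb_refl by lia.
      destruct (Nat.eqb_spec (S (S n)) (S n)); [lia|].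
      unfold dual_coords, bshift, shift_weight, beta. field. repeat split; apply ha.
    + intros k h1 h2. rewrite Fw_f_taylor_val.
      destruct (Nat.eqb_spec k (S n)), (Nat.eqb_spec k (S (S n))); try lia. ring.
  - intros eps he. destruct (hy (eps / (C0 + 1))) as [N hN]; [apply Rdiv_lt_0_compat; lra|].
    exists N. intros m hm. rewrite Cmod_mult, Cmod_opp.
    specialize (hN (S m) ltac:(lia)). specialize (hC (S m)).
    apply Rle_lt_trans with (Cmod (y (S m)) * (C0 + 1)).
    + apply Rmult_le_compat_l; [apply Cmod_ge_0 | lra].
    + apply Rmult_lt_compat_r with (r := C0 + 1) in hN; [|lra].
      unfold Rdiv in hN. rewrite Rmult_assoc, Rinv_l in hN by lra. lra.
Qed.

Variable M : R.
Hypothesis hM : forall n, Cmod (shift_weight a w n) <= M.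

Lemma in_c0_bshift (y : nat -> C) : in_c0 y -> in_c0 (bshift a w y).
Proof.
  intros hy eps he. assert (hM0 : 0 <= M) by (eapply Rle_trans; [apply Cmod_ge_0 | apply (hM 0%nat)]).
  destruct (hy (eps / (M + 1))) as [N hN]; [apply Rdiv_lt_0_compat; lra|].
  exists N. intros n hn. unfold bshift. rewrite Cmod_mult.
  specialize (hN (S n) ltac:(lia)). specialize (hM n).
  apply Rle_lt_trans with ((M + 1) * Cmod (y (S n))).
  - apply Rmult_le_compat_r; [apply Cmod_ge_0 | lra].
  - apply Rmult_lt_compat_l with (r := M + 1) in hN; [|lra].
    replace ((M + 1) * (eps / (M + 1))) with eps in hN by (field; lra). lra.
Qed.

Lemma iter_Fw_adj_dual_coords (y : nat -> C) nu : in_c0 y ->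
  Nat.iter nu (Fw_adj a b w) (dual_coords a b y) = dual_coords a b (Nat.iter nu (bshift a w) y).
Proof.
  intros hy.
  assert (hc0 : forall nu, in_c0 (Nat.iter nu (bshift a w) y))
    by (induction nu0; [auto | apply in_c0_bshift; auto]).
  induction nu; [reflexivity|].
  simpl. rewrite IHnu. apply functional_extensionality. intro n. apply Fw_adj_dual_coords; auto.
Qed.

End Conjugacy.

Section LqBounds.

Variables (q : R) (a b w : nat -> C).
Hypothesis hq : 0 < q.

Lemma in_lq_dual_coords (y : nat -> C) Bb : 0 <= Bb -> (forall k, Cmod (beta a b k) <= Bb) ->
  in_lq q y -> in_lq q (dual_coords a b y) /\
  lq_sum q (dual_coords a b y) <= rpow 2 q * (1 + rpow Bb q) * lq_sum q y.
Proof.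
  intros hB hb hy.
  destruct (in_lq_shift q y hy) as [hs1 hs2].
  destruct (in_lq_dominated q hq (fun k => beta a b (S k) * y (S k))%C (fun k => y (S k)) Bb hB)
    as [h1 h2]; auto.
  { intro n. rewrite Cmod_mult. apply Rmult_le_compat_r; [apply Cmod_ge_0 | auto]. }
  destruct (in_lq_plus q hq y _ hy h1) as [h3 h4]. split; [exact h3|].
  eapply Rle_trans; [exact h4|].
  pose proof (rpow_nonneg 2 q). pose proof (rpow_nonneg Bb q). pose proof (lq_sum_nonneg q y hy).
  assert (lq_sum q (fun k => beta a b (S k) * y (S k))%C <= rpow Bb q * lq_sum q y)
    by (eapply Rle_trans; [exact h2 | apply Rmult_le_compat_l; auto]).
  replace (rpow 2 q * (1 + rpow Bb q) * lq_sum q y)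
    with (rpow 2 q * (lq_sum q y + rpow Bb q * lq_sum q y)) by ring.
  apply Rmult_le_compat_l; auto. lra.
Qed.

Lemma in_lq_iter_bshift (y : nat -> C) M : 0 <= M -> (forall n, Cmod (shift_weight a w n) <= M) ->
  in_lq q y -> forall nu, in_lq q (Nat.iter nu (bshift a w) y).
Proof.
  intros hM hb hy nu. induction nu; [auto|]. simpl.
  destruct (in_lq_shift q _ IHnu) as [hs _].
  apply (in_lq_dominated q hq _ (fun n => Nat.iter nu (bshift a w) y (S n)) M hM); auto.
  intro n. unfold bshift. rewrite Cmod_mult. apply Rmult_le_compat_r; [apply Cmod_ge_0 | auto].
Qed.

End LqBounds.

Definition beta_contractive (a b : nat -> C) : Prop :=
  exists r, 0 <= r < 1 /\ exists K, forall k, (K <= k)%nat -> Cmod (beta a b k) <= r.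

Lemma beta_contractive_of_limsup (a b : nat -> C) :
  Rbar_lt (LimSup_seq (fun n => Cmod (b n / a (S n)))) 1 -> beta_contractive a b.
Proof.
  intros h. destruct (ex_LimSup_seq (fun n => Cmod (b n / a (S n)))) as [l hl].
  rewrite (is_LimSup_seq_unique _ _ hl) in h.
  destruct l as [l| |]; simpl in h, hl; [|contradiction|].
  - destruct (hl (mkposreal ((1 - l) / 2) ltac:(lra))) as [_ [N hN]]. simpl in hN.
    exists (Rmax 0 (l + (1 - l) / 2)). split; [split; [apply Rmax_l | apply Rmax_lub_lt; lra]|].
    exists (S N). intros [|k] hk; [lia|]. simpl.
    eapply Rle_trans; [|apply Rmax_r]. left; apply hN; lia.
  - destruct (hl 0) as [N hN]. exists 0. split; [lra|]. exists (S N).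
    intros [|k] hk; [lia|]. simpl. left; apply hN; lia.
Qed.

Lemma beta_eventually_le_1 (a b : nat -> C) : beta_contractive a b ->
  exists K, forall k, (K <= k)%nat -> Cmod (beta a b k) <= 1.
Proof. intros [r [hr [K hK]]]. exists K. intros k hk. specialize (hK k hk). lra. Qed.

Lemma beta_bounded (a b : nat -> C) : beta_contractive a b ->
  exists Bb, 0 <= Bb /\ forall k, Cmod (beta a b k) <= Bb.
Proof.
  intros [r [hr [K hK]]].
  apply (bounded_of_eventually_bounded (fun k => Cmod (beta a b k)) K r); auto.
  intro; apply Cmod_ge_0.
Qed.

Fixpoint beta_prod (a b : nat -> C) (k j : nat) : C :=
  match j with O => 1%C | S j' => (- beta a b (S k) * beta_prod a b (S k) j')%C end.

(* Beyond the index where [|beta| <= r < 1], [dual_coords y = u] is solved by the Neumann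
   series [y_k = sum_j beta_prod k j * u_(k+j)]; below it, by back-substitution. *)
Definition neumann (a b u : nat -> C) (k : nat) : C :=
  Cseries (fun j => beta_prod a b k j * u (k + j)%nat)%C.

Fixpoint back_subst (a b u : nat -> C) (K0 d : nat) : C :=
  match d with
  | O => neumann a b u K0
  | S d' => (u (K0 - S d')%nat - beta a b (K0 - d')%nat * back_subst a b u K0 d')%C
  end.

Definition dual_solve (a b u : nat -> C) (K0 k : nat) : C :=
  if Nat.leb K0 k then neumann a b u k else back_subst a b u K0 (K0 - k).

Section DualSolve.

Variables (a b u : nat -> C) (r : R) (K0 : nat).
Hypothesis hr : 0 <= r < 1.
Hypothesis hbeta : forall m, (K0 <= m)%nat -> Cmod (beta a b m) <= r.

Lemma Cmod_beta_prod_le k j : (K0 <= k)%nat -> Cmod (beta_prod a b k j) <= r ^ j.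
Proof.
  revert k; induction j; intros k hk; cbn [beta_prod pow]; [rewrite Cmod_1; lra|].
  rewrite Cmod_mult, Cmod_opp.
  apply Rmult_le_compat; [apply Cmod_ge_0 | apply Cmod_ge_0 | apply hbeta; lia | apply IHj; lia].
Qed.

Lemma Cmod_neumann_term_le k B : (K0 <= k)%nat -> (forall m, (k <= m)%nat -> Cmod (u m) <= B) ->
  forall j, Cmod (beta_prod a b k j * u (k + j)%nat)%C <= r ^ j * B.
Proof.
  intros hk hB j. rewrite Cmod_mult.
  apply Rmult_le_compat; [apply Cmod_ge_0 | apply Cmod_ge_0 | apply Cmod_beta_prod_le; auto | apply hB; lia].
Qed.

Lemma Cmod_neumann_le k B : (K0 <= k)%nat -> (forall m, (k <= m)%nat -> Cmod (u m) <= B) ->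
  Cmod (neumann a b u k) <= 2 * (B / (1 - r)).
Proof. intros hk hB. apply Cmod_Cseries_le_geom; auto. apply Cmod_neumann_term_le; auto. Qed.

Hypothesis hu : in_c0 u.

Lemma neumann_rec k : (K0 <= k)%nat ->
  neumann a b u k = (u k - beta a b (S k) * neumann a b u (S k))%C.
Proof.
  intros hk. destruct (in_c0_bounded u hu) as [B [hB0 hB]].
  assert (e1 := ex_Cseries_geom_dominated _ r B hr (Cmod_neumann_term_le k B hk (fun m _ => hB m))).
  assert (e2 := ex_Cseries_geom_dominated _ r B hr
                  (Cmod_neumann_term_le (S k) B ltac:(lia) (fun m _ => hB m))).
  unfold neumann. rewrite Cseries_incr_1 by auto.
  rewrite (Cseries_ext _ (fun j => (- beta a b (S k)) * (beta_prod a b (S k) j * u (S k + j)%nat))%C).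
  - rewrite Cseries_scal_l by auto. simpl. rewrite Nat.add_0_r. ring.
  - intro j. simpl. rewrite Nat.add_succ_r. ring.
Qed.

Lemma in_c0_dual_solve : in_c0 (dual_solve a b u K0).
Proof.
  intros eps he. destruct (hu (eps * (1 - r) / 4)) as [N hN].
  { apply Rdiv_lt_0_compat; [apply Rmult_lt_0_compat|]; lra. }
  exists (N + K0)%nat. intros k hk. unfold dual_solve. destruct (Nat.leb_spec K0 k); [|lia].
  eapply Rle_lt_trans.
  - apply (Cmod_neumann_le k (eps * (1 - r) / 4)); [lia|]. intros m hm. left; apply hN; lia.
  - replace (2 * (eps * (1 - r) / 4 / (1 - r))) with (eps / 2) by (field; lra). lra.
Qed.

Lemma dual_coords_dual_solve : dual_coords a b (dual_solve a b u K0) = u.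
Proof.
  apply functional_extensionality. intro k. unfold dual_coords, dual_solve.
  destruct (Nat.leb_spec K0 k).
  - destruct (Nat.leb_spec K0 (S k)); [|lia]. rewrite neumann_rec by auto. ring.
  - replace (K0 - k)%nat with (S (K0 - S k)) by lia. simpl back_subst.
    replace (K0 - S (K0 - S k))%nat with k by lia. replace (K0 - (K0 - S k))%nat with (S k) by lia.
    destruct (Nat.leb_spec K0 (S k)); [|ring].
    replace (K0 - S k)%nat with 0%nat by lia. replace K0 with (S k) by lia. simpl. ring.
Qed.

End DualSolve.

Lemma dual_coords_onto_c0 (a b u : nat -> C) : beta_contractive a b ->
  in_c0 u -> exists y, in_c0 y /\ dual_coords a b y = u.
Proof.
  intros [r [hr [K0 hK]]] hu. exists (dual_solve a b u K0).
  split; [apply (in_c0_dual_solve _ _ _ r) | apply (dual_coords_dual_solve _ _ _ r)]; auto.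
Qed.

(** * Bounded weight products *)

Fixpoint weight_prod (a w : nat -> C) (m nu : nat) : C :=
  match nu with O => 1%C | S nu' => (shift_weight a w m * weight_prod a w (S m) nu')%C end.

Lemma iter_bshift (a w y : nat -> C) nu m :
  Nat.iter nu (bshift a w) y m = (weight_prod a w m nu * y (m + nu)%nat)%C.
Proof.
  revert m; induction nu; intro m; [simpl; rewrite Nat.add_0_r; ring|].
  simpl Nat.iter. unfold bshift at 1. rewrite IHnu, Nat.add_succ_r. simpl. ring.
Qed.

Lemma weight_prod_add (a w : nat -> C) i n nu :
  weight_prod a w i (n + nu) = (weight_prod a w i n * weight_prod a w (i + n) nu)%C.
Proof.
  revert i; induction n; intro i; [simpl; rewrite Nat.add_0_r; ring|].
  simpl. rewrite IHn, Nat.add_succ_r. simpl. ring.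
Qed.

Lemma Cmod_weight_prod_le_pow (a w : nat -> C) M i nu :
  (forall n, Cmod (shift_weight a w n) <= M) -> Cmod (weight_prod a w i nu) <= M ^ nu.
Proof.
  intros hM. revert i; induction nu; intro i; simpl; [rewrite Cmod_1; lra|].
  rewrite Cmod_mult. apply Rmult_le_compat; [apply Cmod_ge_0 | apply Cmod_ge_0 | apply hM | apply IHnu].
Qed.

Section NonzeroWeights.

Variables a w : nat -> C.
Hypothesis ha : forall k, a k <> 0%C.
Hypothesis hw : forall k, w k <> 0%C.

Lemma weight_prod_neq0 m nu : weight_prod a w m nu <> 0%C.
Proof.
  revert m; induction nu; intro m; simpl.
  - intro h. apply (f_equal Cmod) in h. rewrite Cmod_1, Cmod_0 in h. lra.
  - apply Cmult_neq_0; [|apply IHnu].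
    unfold shift_weight. intro h.
    apply (Cmult_neq_0 (w m) (a m) (hw m) (ha m)).
    apply (f_equal (fun z => z * a (S m))%C) in h. rewrite Cmult_0_l in h.
    rewrite <- h. field. apply ha.
Qed.

Lemma Cmod_weight_prod_pos m nu : 0 < Cmod (weight_prod a w m nu).
Proof. apply Cmod_gt_0, weight_prod_neq0. Qed.

Lemma Cmod_weight_prod_le_ratio i nu Pm : (forall m, Cmod (weight_prod a w 0 m) <= Pm) ->
  Cmod (weight_prod a w i nu) <= Pm / Cmod (weight_prod a w 0 i).
Proof.
  intros hP. pose proof (Cmod_weight_prod_pos 0 i) as hpos.
  apply Rmult_le_reg_l with (Cmod (weight_prod a w 0 i)); auto.
  rewrite <- Cmod_mult. change i with (0 + i)%nat at 2. rewrite <- weight_prod_add.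
  replace (Cmod (weight_prod a w 0 i) * (Pm / Cmod (weight_prod a w 0 i))) with Pm by (field; lra).
  apply hP.
Qed.

End NonzeroWeights.

Lemma Cmod_weight_prod_middle_gt (a w : nat -> C) M j L R A B X : 1 <= M ->
  (forall n, Cmod (shift_weight a w n) <= M) -> (j <= A)%nat -> (R <= B)%nat ->
  M ^ (A + B) * X < Cmod (weight_prod a w 0 (j + L + R)) -> X < Cmod (weight_prod a w j L).
Proof.
  intros hM1 hM hj hR hX.
  rewrite !weight_prod_add, !Cmod_mult in hX. simpl in hX.
  pose proof (Cmod_weight_prod_le_pow a w M 0 j hM). pose proof (Cmod_weight_prod_le_pow a w M (j + L) R hM).
  assert (M ^ j <= M ^ A) by (apply Rle_pow; auto).
  assert (M ^ R <= M ^ B) by (apply Rle_pow; auto).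
  assert (hpow : 0 < M ^ (A + B)) by (apply pow_lt; lra).
  apply Rmult_lt_reg_l with (M ^ (A + B)); auto. eapply Rlt_le_trans; [exact hX|].
  rewrite pow_add. pose proof (Cmod_ge_0 (weight_prod a w j L)).
  pose proof (Cmod_ge_0 (weight_prod a w 0 j)). pose proof (Cmod_ge_0 (weight_prod a w (j + L) R)).
  pose proof (pow_lt M A ltac:(lra)). pose proof (pow_lt M B ltac:(lra)).
  replace (M ^ A * M ^ B * Cmod (weight_prod a w j L))
    with (M ^ A * Cmod (weight_prod a w j L) * M ^ B) by ring.
  apply Rmult_le_compat; [apply Rmult_le_pos; lra | lra | |lra].
  apply Rmult_le_compat_r; lra.
Qed.

Lemma is_lim_seq_Cmod_in_c0 (y : nat -> C) n : in_c0 y ->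
  is_lim_seq (fun nu => Cmod (y (n + nu)%nat)) 0.
Proof.
  intros hy. apply is_lim_seq_spec. intro eps. destruct (hy eps (cond_pos eps)) as [N hN].
  exists N. intros nu hnu. rewrite Rminus_0_r, Rabs_pos_eq by apply Cmod_ge_0. apply hN. lia.
Qed.

Lemma orbits_tend_to_0_of_bounded_weight_prod (a b w : nat -> C) q M Pm : 0 < q ->
  (forall k, a k <> 0%C) -> (forall k, w k <> 0%C) -> beta_contractive a b ->
  (forall n, Cmod (shift_weight a w n) <= M) -> (forall m, Cmod (weight_prod a w 0 m) <= Pm) ->
  forall u, in_lq q u -> forall n,
    is_lim_seq (fun nu => Cmod (Nat.iter nu (Fw_adj a b w) u n)) 0.
Proof.
  intros hq ha hw hbeta hM hP u hu n.
  destruct (dual_coords_onto_c0 a b u hbeta (in_lq_in_c0 q hq u hu)) as [y [hy <-]].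
  destruct (beta_bounded a b hbeta) as [Bb [hBb0 hBb]].
  set (A0 := Pm / Cmod (weight_prod a w 0 n)).
  set (A1 := Bb * (Pm / Cmod (weight_prod a w 0 (S n)))).
  assert (hA0 : 0 <= A0).
  { unfold A0. pose proof (Cmod_weight_prod_pos a w ha hw 0 n).
    pose proof (Rle_trans _ _ _ (Cmod_ge_0 _) (hP 0%nat)). apply Rdiv_le_0_compat; lra. }
  apply (is_lim_seq_le_le (fun _ => 0) _
           (fun nu => A0 * Cmod (y (n + nu)%nat) + A1 * Cmod (y (S n + nu)%nat))).
  - intro nu. split; [apply Cmod_ge_0|].
    rewrite (iter_Fw_adj_dual_coords a b w ha (beta_eventually_le_1 a b hbeta) M hM) by auto.
    unfold dual_coords. rewrite !iter_bshift.
    eapply Rle_trans; [apply Cmod_triangle|]. rewrite !Cmod_mult.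
    pose proof (Cmod_weight_prod_le_ratio a w ha hw n nu Pm hP).
    pose proof (Cmod_weight_prod_le_ratio a w ha hw (S n) nu Pm hP).
    pose proof (Cmod_ge_0 (y (n + nu)%nat)). pose proof (Cmod_ge_0 (y (S n + nu)%nat)).
    pose proof (Cmod_ge_0 (weight_prod a w (S n) nu)). pose proof (hBb (S n)).
    apply Rplus_le_compat; [apply Rmult_le_compat_r; auto|].
    unfold A1. rewrite <- Rmult_assoc. apply Rmult_le_compat_r; auto.
    apply Rmult_le_compat; auto. apply Cmod_ge_0.
  - apply is_lim_seq_const.
  - replace (Finite 0) with (Finite (A0 * 0 + A1 * 0)) by (f_equal; ring).
    apply is_lim_seq_plus'; [exact (is_lim_seq_scal_l _ A0 0 (is_lim_seq_Cmod_in_c0 y n hy))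
                           | exact (is_lim_seq_scal_l _ A1 0 (is_lim_seq_Cmod_in_c0 y (S n) hy))].
Qed.

Lemma Cmod_minus_ge (x y : C) : Cmod y - Cmod x <= Cmod (x - y).
Proof.
  replace y with (x + - (x - y))%C at 1 by ring.
  pose proof (Cmod_triangle x (- (x - y))) as h. rewrite Cmod_opp in h. lra.
Qed.

Lemma not_hypercyclic_of_orbits_tend_to_0 (T : (nat -> C) -> (nat -> C)) q : 0 < q ->
  (forall u, in_lq q u -> forall n, is_lim_seq (fun nu => Cmod (Nat.iter nu T u n)) 0) ->
  ~ hypercyclic_lq q T.
Proof.
  intros hq horb [u [hu hdense]].
  pose proof (horb u hu 0%nat) as hlim. apply is_lim_seq_spec in hlim.
  destruct (hlim (mkposreal 1 Rlt_0_1)) as [N hN]. simpl in hN.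
  destruct (bounded_of_eventually_bounded (fun nu => Cmod (Nat.iter nu T u 0%nat)) N 1)
    as [B [hB0 hB]]; [intro; apply Cmod_ge_0| |].
  { intros nu hnu. specialize (hN nu hnu). rewrite Rminus_0_r, Rabs_pos_eq in hN by apply Cmod_ge_0.
    lra. }
  set (v := fun k : nat => if Nat.eqb k 0 then RtoC (B + 1) else 0%C).
  assert (hv : in_lq q v)
    by (apply in_lq_finite_support with 1%nat; intros k hk; unfold v; destruct (Nat.eqb_spec k 0); [lia | auto]).
  destruct (hdense v hv 1 Rlt_0_1) as [nu [hin hlt]].
  pose proof (Cmod_le_lq_norm q hq _ 0%nat (proj1 (in_lq_minus q hq _ _ hin hv))) as hge.
  pose proof (Cmod_minus_ge (Nat.iter nu T u 0%nat) (v 0%nat)) as hrev.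
  assert (hv0 : Cmod (v 0%nat) = B + 1) by (unfold v; simpl; rewrite Cmod_R, Rabs_pos_eq; lra).
  specialize (hB nu). simpl in hge. lra.
Qed.

(** * A countable family of targets *)

(* [c] codes the list [x_0, x_1, ...] as [<x_0, <x_1, ...>>] under Cantor pairing. *)
Definition code_seq (c j : nat) : nat :=
  fst (Cantor.of_nat (Nat.iter j (fun c => snd (Cantor.of_nat c)) c)).

Definition gauss_rat (d t : nat) : C :=
  let '(p1, r1) := Cantor.of_nat t in
  let '(p2, r2) := Cantor.of_nat r1 in
  let '(p3, p4) := Cantor.of_nat r2 in
  ((INR p1 - INR p2) / (INR d + 1), (INR p3 - INR p4) / (INR d + 1)).

Definition coded_seq (d c j : nat) : C := gauss_rat d (code_seq c j).

Lemma gauss_rat_0 d : gauss_rat d 0 = 0%C.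
Proof. unfold gauss_rat. simpl. unfold RtoC. f_equal; unfold Rdiv; ring. Qed.

Lemma code_seq_onto (s : nat -> nat) N : (forall j, (N <= j)%nat -> s j = 0%nat) ->
  exists c, forall j, code_seq c j = s j.
Proof.
  revert s; induction N; intros s hs.
  - exists 0%nat. intro j. rewrite hs by lia. unfold code_seq.
    replace (Nat.iter j (fun c => snd (Cantor.of_nat c)) 0%nat) with 0%nat; [reflexivity|].
    induction j; [reflexivity | simpl; rewrite <- IHj; reflexivity].
  - destruct (IHN (fun j => s (S j))) as [c hc]; [intros; apply hs; lia|].
    exists (Cantor.to_nat (s 0%nat, c)). intros [|j]; unfold code_seq.
    + change (fst (Cantor.of_nat (Cantor.to_nat (s 0%nat, c))) = s 0%nat).
      rewrite cancel_of_to. reflexivity.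
    + rewrite Nat.iter_succ_r, cancel_of_to. apply hc.
Qed.

Lemma real_approx_grid (X : R) (d : nat) : exists p1 p2 : nat,
  Rabs ((INR p1 - INR p2) / (INR d + 1) - X) <= 1 / (INR d + 1).
Proof.
  assert (hd : 0 < INR d + 1) by (pose proof (pos_INR d); lra).
  set (k := (up (X * (INR d + 1)) - 1)%Z).
  destruct (archimed (X * (INR d + 1))) as [h1 h2].
  exists (Z.to_nat k), (Z.to_nat (- k)).
  assert (e : INR (Z.to_nat k) - INR (Z.to_nat (- k)) = IZR k).
  { rewrite !INR_IZR_INZ. destruct (Z.le_gt_cases 0 k).
    - rewrite Z2Nat.id by lia. replace (Z.to_nat (-k)) with 0%nat by lia. simpl. ring.
    - replace (Z.to_nat k) with 0%nat by lia. rewrite Z2Nat.id by lia. rewrite opp_IZR. simpl. ring. }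
  rewrite e. unfold k. rewrite minus_IZR.
  replace ((IZR (up (X * (INR d + 1))) - 1) / (INR d + 1) - X)
    with ((IZR (up (X * (INR d + 1))) - 1 - X * (INR d + 1)) / (INR d + 1)) by (field; lra).
  unfold Rdiv. rewrite Rabs_mult, Rabs_inv, (Rabs_pos_eq (INR d + 1)) by lra.
  apply Rmult_le_compat_r; [left; apply Rinv_0_lt_compat; lra|].
  apply Rabs_le. lra.
Qed.

Lemma gauss_rat_approx (d : nat) (x : C) : exists t, Cmod (gauss_rat d t - x) <= 2 / (INR d + 1).
Proof.
  destruct x as [x1 x2].
  destruct (real_approx_grid x1 d) as [p1 [p2 h1]]. destruct (real_approx_grid x2 d) as [p3 [p4 h2]].
  exists (Cantor.to_nat (p1, Cantor.to_nat (p2, Cantor.to_nat (p3, p4)))).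
  unfold gauss_rat. rewrite !cancel_of_to.
  eapply Rle_trans; [apply Cmod_le_2max_Re_Im|]. simpl.
  unfold Rminus, Rdiv in *. rewrite Rmult_1_l in h1, h2.
  apply Rmult_le_compat_l; [lra|]. apply Rmax_lub; auto.
Qed.

Lemma coded_seq_approx (z : nat -> C) N rho : 0 < rho -> (forall j, (N <= j)%nat -> z j = 0%C) ->
  exists d c, (forall j, (N <= j)%nat -> code_seq c j = 0%nat) /\
              forall j, Cmod (coded_seq d c j - z j) <= rho.
Proof.
  intros hrho hz.
  destruct (INR_unbounded (2 / rho)) as [d hd].
  assert (hgrid : 2 / (INR d + 1) <= rho).
  { apply Rle_trans with (2 / (2 / rho)); [|right; field; lra].
    apply Rmult_le_compat_l; [lra|]. apply Rinv_le_contravar; [apply Rdiv_lt_0_compat|]; lra. }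
  assert (hpick : forall j, exists t, ((j < N)%nat -> Cmod (gauss_rat d t - z j) <= rho) /\
                                     ((N <= j)%nat -> t = 0%nat)).
  { intro j. destruct (Nat.lt_ge_cases j N).
    - destruct (gauss_rat_approx d (z j)) as [t ht]. exists t. split; intro; [lra | lia].
    - exists 0%nat. split; intro; [lia | auto]. }
  destruct (functional_choice _ hpick) as [s hs].
  destruct (code_seq_onto s N) as [c hc]; [intros j hj; apply hs; auto|].
  exists d, c. split; [intros j hj; rewrite hc; apply hs; auto|].
  intro j. unfold coded_seq. rewrite hc. destruct (Nat.lt_ge_cases j N); [apply hs; auto|].
  rewrite (proj2 (hs j)), gauss_rat_0, hz by auto.
  replace (RtoC 0 - RtoC 0)%C with (RtoC 0) by ring. rewrite Cmod_0. lra.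
Qed.

Fixpoint back_solve (a b v : nat -> C) (f j : nat) : C :=
  match f with O => 0%C | S f' => (v j - beta a b (S j) * back_solve a b v f' (S j))%C end.

Lemma dual_coords_back_solve (a b v : nat -> C) N j :
  dual_coords a b (fun j => back_solve a b v (N - j) j) j = truncate v N j.
Proof.
  unfold dual_coords, truncate. destruct (Nat.ltb_spec j N).
  - replace (N - j)%nat with (S (N - S j)) by lia. simpl. ring.
  - replace (N - j)%nat with 0%nat by lia. replace (N - S j)%nat with 0%nat by lia. simpl. ring.
Qed.

(* Truncate [v], invert [dual_coords] on the truncation by back-substitution, round to the grid. *)
Lemma coded_seq_dense (a b : nat -> C) q Bb : 0 < q -> 0 <= Bb ->
  (forall k, Cmod (beta a b k) <= Bb) ->
  forall v, in_lq q v -> forall eta, 0 < eta ->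
  exists d c N, (forall j, (N <= j)%nat -> code_seq c j = 0%nat) /\
    in_lq q (fun j => dual_coords a b (coded_seq d c) j - v j)%C /\
    lq_sum q (fun j => dual_coords a b (coded_seq d c) j - v j)%C < eta.
Proof.
  intros hq hB0 hB v hv eta he.
  set (c2 := rpow 2 q). set (CJ := c2 * (1 + rpow Bb q)).
  assert (hc2 : 0 < c2) by (apply rpow_pos; lra).
  assert (hCJ : 0 < CJ) by (pose proof (rpow_nonneg Bb q); apply Rmult_lt_0_compat; lra).
  destruct (lq_sum_tail_small q v (eta / (2 * c2)) hv) as [N hN]; [apply Rdiv_lt_0_compat; lra|].
  set (z := fun j => back_solve a b v (N - j) j).
  assert (hz : forall j, (N <= j)%nat -> z j = 0%C)
    by (intros j hj; unfold z; replace (N - j)%nat with 0%nat by lia; reflexivity).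
  set (rho0 := eta / (2 * c2 * CJ * (INR N + 1))).
  assert (hrho0 : 0 < rho0)
    by (unfold rho0; pose proof (pos_INR N); apply Rdiv_lt_0_compat; [lra|];
        apply Rmult_lt_0_compat; [apply Rmult_lt_0_compat|]; lra).
  destruct (coded_seq_approx z N (rpow rho0 (/ q)) (rpow_pos _ _ hrho0) hz) as [d [c [hc hdc]]].
  exists d, c, N. split; auto.
  set (e := fun j => (coded_seq d c j - z j)%C).
  assert (he_supp : forall j, (N <= j)%nat -> e j = 0%C).
  { intros j hj. unfold e, coded_seq. rewrite hc, gauss_rat_0, hz by auto. ring. }
  destruct (Series_finite_support_le (fun j => rpow (Cmod (e j)) q) N rho0) as [hex hS].
  { intros j hj. rewrite he_supp, Cmod_0 by auto. apply rpow_0_l. }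
  { intro j. split; [apply rpow_nonneg|]. rewrite <- (rpow_inv_rpow rho0 q) by lra.
    apply rpow_le_compat; [lra|]. split; [apply Cmod_ge_0 | apply hdc]. }
  destruct (in_lq_dual_coords q a b hq e Bb hB0 hB hex) as [hJe hJS].
  assert (htr : in_lq q (fun j => truncate v N j - v j)%C)
    by (apply (in_lq_minus q hq); auto; apply in_lq_finite_support with N;
        intros k hk; unfold truncate; destruct (Nat.ltb_spec k N); [lia | auto]).
  replace (fun j => dual_coords a b (coded_seq d c) j - v j)%C
    with (fun j => dual_coords a b e j + (truncate v N j - v j))%C.
  2:{ apply functional_extensionality. intro j. rewrite <- (dual_coords_back_solve a b v N j).
      unfold dual_coords, e, z. ring. }
  apply lq_sum_plus_lt; auto. fold c2.
  eapply Rle_lt_trans; [exact hJS|]. fold c2 CJ.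
  apply Rle_lt_trans with (CJ * (INR N * rho0)); [apply Rmult_le_compat_l; [lra | exact hS]|].
  unfold rho0. pose proof (pos_INR N).
  replace (CJ * (INR N * (eta / (2 * c2 * CJ * (INR N + 1)))))
    with (eta / (2 * c2) * (INR N / (INR N + 1))) by (field; lra).
  rewrite <- (Rmult_1_r (eta / (2 * c2))) at 2.
  apply Rmult_lt_compat_l; [apply Rdiv_lt_0_compat; lra|].
  apply Rmult_lt_reg_r with (INR N + 1); [lra|]. unfold Rdiv. rewrite Rmult_assoc, Rinv_l by lra. lra.
Qed.

(** * Unbounded weight products *)

Definition indicator (P : bool) : R := if P then 1 else 0.

Lemma sum_n_indicator_point (a s L : nat) :
  sum_n (fun m => indicator (Nat.eqb (m + s) a)) L <= 1.
Proof.
  assert (e : forall L, sum_n (fun m => indicator (Nat.eqb (m + s) a)) L =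
                        if andb (Nat.leb (a - s) L) (Nat.leb s a) then 1 else 0).
  { unfold indicator. induction L0.
    - rewrite sum_O. destruct (Nat.eqb_spec (0 + s) a), (Nat.leb_spec (a - s) 0), (Nat.leb_spec s a);
        simpl; try lia; auto.
    - rewrite sum_Sn, IHL0. change plus with Rplus.
      destruct (Nat.eqb_spec (S L0 + s) a), (Nat.leb_spec (a - s) L0), (Nat.leb_spec (a - s) (S L0)),
        (Nat.leb_spec s a); simpl; try lia; lra. }
  rewrite e. destruct (andb _ _); lra.
Qed.

Lemma sum_n_indicator_interval (N a s L : nat) :
  sum_n (fun m => indicator (andb (Nat.leb a (m + s)) (Nat.ltb (m + s) (a + N)))) L <= INR N.
Proof.
  unfold indicator. revert a; induction N; intro a.
  - rewrite sum_n_ext with (b := fun _ => 0); [rewrite sum_n_const; simpl; lra|].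
    intro m. destruct (Nat.leb_spec a (m + s)), (Nat.ltb_spec (m + s) (a + 0)); simpl; auto; lia.
  - rewrite sum_n_ext with (b := fun m => indicator (Nat.eqb (m + s) a) +
                 indicator (andb (Nat.leb (S a) (m + s)) (Nat.ltb (m + s) (S a + N)))).
    + rewrite (sum_n_plus (G := R_AbelianMonoid)). change plus with Rplus. rewrite S_INR.
      pose proof (sum_n_indicator_point a s L). specialize (IHN (S a)). unfold indicator in *. lra.
    + intro m. unfold indicator.
      destruct (Nat.eqb_spec (m + s) a), (Nat.leb_spec a (m + s)), (Nat.ltb_spec (m + s) (a + S N)),
        (Nat.leb_spec (S a) (m + s)), (Nat.ltb_spec (m + s) (S a + N)); simpl; try lia; ring.
Qed.

Lemma sum_n_geom_from (k0 I : nat) :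
  sum_n (fun i => if Nat.leb k0 i then (/2) ^ i else 0) I <= 2 * (/2) ^ k0.
Proof.
  assert (e : @eq R (sum_n (fun i => if Nat.leb k0 i then (/2) ^ i else 0) I)
                     (if Nat.leb k0 I then 2 * (/2) ^ k0 - 2 * (/2) ^ (S I) else 0)).
  { induction I.
    - rewrite sum_O. destruct (Nat.leb_spec k0 0); auto. replace k0 with 0%nat by lia. simpl. field.
    - rewrite sum_Sn, IHI. change plus with Rplus.
      destruct (Nat.leb_spec k0 I), (Nat.leb_spec k0 (S I)); try lia.
      + simpl. field.
      + replace k0 with (S I) by lia. simpl. field.
      + ring. }
  rewrite e. pose proof (pow_lt (/2) k0 ltac:(lra)). pose proof (pow_lt (/2) (S I) ltac:(lra)).
  destruct (Nat.leb k0 I); lra.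
Qed.

(* Double counting: [h m] is charged to the block containing [m + s], and block [i]
   receives at most [len i] charges. *)
Lemma series_block_bound (h : nat -> R) (start len : nat -> nat) s k0 :
  (forall i, (i <= start i)%nat) -> (forall m, 0 <= h m) ->
  (forall m, h m = 0 \/ exists i, (k0 <= i)%nat /\ (start i <= m + s < start i + len i)%nat /\
                                  h m <= (/2) ^ i / INR (len i)) ->
  ex_series h /\ Series h <= 2 * (/2) ^ k0.
Proof.
  intros hstart hpos hh. apply ex_series_nonneg_bounded; auto. intro L.
  set (inblk := fun i m => andb (Nat.leb (start i) (m + s)) (Nat.ltb (m + s) (start i + len i))).
  set (g := fun i m => if andb (Nat.leb k0 i) (inblk i m) then (/2) ^ i / INR (len i) else 0).
  assert (hg0 : forall i m, 0 <= g i m).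
  { intros i m. unfold g, inblk.
    destruct (Nat.leb_spec k0 i), (Nat.leb_spec (start i) (m + s)),
      (Nat.ltb_spec (m + s) (start i + len i)); simpl; try lra.
    apply Rdiv_le_0_compat; [apply pow_le; lra | apply lt_0_INR; lia]. }
  assert (hcover : forall m, (m <= L)%nat -> h m <= sum_n (fun i => g i m) (L + s)).
  { intros m hm. destruct (hh m) as [-> | [i [hi [hb hle]]]]; [apply sum_n_nonneg; auto|].
    eapply Rle_trans; [|apply (sum_n_ge_term (fun i => g i m) (L + s) i); auto].
    - unfold g, inblk. destruct (Nat.leb_spec k0 i), (Nat.leb_spec (start i) (m + s)),
        (Nat.ltb_spec (m + s) (start i + len i)); simpl; try lia. auto.
    - specialize (hstart i). lia. }
  apply Rle_trans with (sum_n (fun m => sum_n (fun i => g i m) (L + s)) L).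
  { apply Rle_trans with (sum_n (fun m => if Nat.leb m L then h m else 0) L).
    - right. apply sum_n_ext_loc. intros m hm. destruct (Nat.leb_spec m L); [auto | lia].
    - apply sum_n_le_compat. intro m. destruct (Nat.leb_spec m L).
      + apply hcover; auto.
      + apply sum_n_nonneg. auto. }
  rewrite (sum_n_switch (G := R_AbelianMonoid) (fun m i => g i m)).
  eapply Rle_trans; [|apply (sum_n_geom_from k0 (L + s))].
  apply sum_n_le_compat. intro i. unfold g.
  destruct (Nat.leb_spec k0 i); simpl; [|rewrite sum_n_const; right; ring].
  destruct (Nat.eq_dec (len i) 0) as [e|ne].
  { rewrite sum_n_ext with (b := fun _ => 0); [rewrite sum_n_const; simpl; rewrite Rmult_0_r;
      apply pow_le; lra|].
    intro m. unfold inblk. rewrite e, Nat.add_0_r.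
    destruct (Nat.leb_spec (start i) (m + s)), (Nat.ltb_spec (m + s) (start i)); simpl; auto; lia. }
  assert (hlen : 0 < INR (len i)) by (apply lt_0_INR; lia).
  rewrite sum_n_ext with (b := fun m => indicator (inblk i m) * ((/2) ^ i / INR (len i)))
    by (intro m; unfold indicator; destruct (inblk i m); simpl; ring).
  rewrite (sum_n_mult_r (K := R_Ring)). change mult with Rmult.
  apply Rle_trans with (INR (len i) * ((/2) ^ i / INR (len i))); [|right; field; lra].
  apply Rmult_le_compat_r; [apply Rdiv_le_0_compat; [apply pow_le |]; lra|].
  apply sum_n_indicator_interval.
Qed.

Lemma sum_n_single (g : nat -> C) k N : (forall i, i <> k -> g i = 0%C) ->
  (k <= N)%nat -> @eq C (sum_n g N) (g k).
Proof.
  intros hg hk.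
  assert (h0 : forall N, (N < k)%nat -> @eq C (sum_n g N) 0%C).
  { induction N0; intro h; [rewrite sum_O; apply hg; lia|].
    rewrite sum_Sn, IHN0, (hg (S N0)) by lia. apply Cplus_0_l. }
  induction hk.
  - destruct k; [rewrite sum_O; auto|]. rewrite sum_Sn, h0 by lia. apply Cplus_0_l.
  - rewrite sum_Sn, IHhk, (hg (S m)) by lia. apply Cplus_0_r.
Qed.

Lemma sum_n_zero (g : nat -> C) N : (forall i, g i = 0%C) -> @eq C (sum_n g N) 0%C.
Proof. intros h. induction N; [rewrite sum_O; auto | rewrite sum_Sn, IHN, h; apply Cplus_0_l]. Qed.

Section BlockConstruction.

Variables (a w : nat -> C) (E : nat -> nat -> C) (q M : R).
Hypothesis ha : forall k, a k <> 0%C.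
Hypothesis hw : forall k, w k <> 0%C.
Hypothesis hq : 0 < q.
Hypothesis hM1 : 1 <= M.
Hypothesis hM : forall n, Cmod (shift_weight a w n) <= M.
Hypothesis hE : forall i j, (i < j)%nat -> E i j = 0%C.
Hypothesis hunb : forall K m0, exists m, (m0 <= m)%nat /\ K < Cmod (weight_prod a w 0 m).

Let beyond K m0 : nat := proj1_sig (constructive_indefinite_description _ (hunb K m0)).

Let beyond_spec K m0 : (m0 <= beyond K m0)%nat /\ K < Cmod (weight_prod a w 0 (beyond K m0)).
Proof. unfold beyond. destruct (constructive_indefinite_description _ _). auto. Qed.

(* The target [E i] is placed in a block of length [S i], whose entries the construction
   keeps below [entry_cap i], so that the block contributes at most [(1/2)^i] to [lq_sum]. *)
Let mass i : R := sum_n (fun j => Cmod (E i j)) i.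
Let entry_cap i : R := rpow ((/2) ^ i / INR (S i)) (/ q).
Let threshold i prev : R := M ^ (S i + (S i + prev)) * (mass i / entry_cap i).

Fixpoint blk_end (i : nat) : nat :=
  match i with
  | O => beyond (threshold 0 0) 1
  | S i' => beyond (threshold (S i') (blk_end i' - S i')) (blk_end i' + S (S i'))
  end.

Let start i : nat := (blk_end i - S i)%nat.
Let prev_start i : nat := match i with O => O | S i' => start i' end.
Let in_block i m : bool := andb (Nat.leb (start i) m) (Nat.ltb m (start i + S i)).

Let entry_cap_pos i : 0 < entry_cap i.
Proof. apply rpow_pos, Rdiv_lt_0_compat; [apply pow_lt; lra | apply lt_0_INR; lia]. Qed.

Let rpow_entry_cap i : rpow (entry_cap i) q = (/2) ^ i / INR (S i).
Proof.
  apply rpow_inv_rpow; [lra|].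
  apply Rdiv_le_0_compat; [apply pow_le; lra | apply lt_0_INR; lia].
Qed.

Let blk_end_spec i :
  (S i <= blk_end i)%nat /\ threshold i (prev_start i) < Cmod (weight_prod a w 0 (blk_end i)).
Proof.
  destruct i as [|i]; simpl blk_end; (split; [|apply beyond_spec]).
  - pose proof (proj1 (beyond_spec (threshold 0 0) 1)). lia.
  - pose proof (proj1 (beyond_spec (threshold (S i) (blk_end i - S i)) (blk_end i + S (S i)))). lia.
Qed.

Let start_add i : (start i + S i = blk_end i)%nat.
Proof. pose proof (proj1 (blk_end_spec i)). unfold start. lia. Qed.

Let blk_end_le_start_S i : (blk_end i <= start (S i))%nat.
Proof.
  unfold start. simpl blk_end.
  pose proof (proj1 (beyond_spec (threshold (S i) (blk_end i - S i)) (blk_end i + S (S i)))). lia.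
Qed.

Let blk_end_le_start k i : (k < i)%nat -> (blk_end k <= start i)%nat.
Proof.
  intros h. induction h; [apply blk_end_le_start_S|].
  pose proof (blk_end_le_start_S m). pose proof (start_add m). lia.
Qed.

Let start_ge i : (i <= start i)%nat.
Proof. destruct i; [lia|]. pose proof (blk_end_le_start_S i). pose proof (blk_end_spec i). lia. Qed.

Let start_le_prev_start k i : (k < i)%nat -> (start k <= prev_start i)%nat.
Proof.
  intros h. destruct i; [lia|]. simpl. destruct (Nat.eq_dec k i); [subst; lia|].
  pose proof (blk_end_le_start k i ltac:(lia)). pose proof (start_add k). lia.
Qed.

Let in_block_unique i i' m : in_block i m = true -> in_block i' m = true -> i = i'.
Proof.
  unfold in_block. intros h1 h2.
  destruct (Nat.leb_spec (start i) m), (Nat.ltb_spec m (start i + S i)); try discriminate.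
  destruct (Nat.leb_spec (start i') m), (Nat.ltb_spec m (start i' + S i')); try discriminate.
  destruct (Nat.lt_total i i') as [h|[h|h]]; auto.
  - pose proof (blk_end_le_start i i' h). pose proof (start_add i). lia.
  - pose proof (blk_end_le_start i' i h). pose proof (start_add i'). lia.
Qed.

(* The choice of [blk_end i] makes every partial product [weight_prod j (start i - s)]
   reaching block [i] from an earlier block large. *)
Let entry_le_cap i s j : (s <= prev_start i)%nat -> (j < S i)%nat ->
  Cmod (E i j / weight_prod a w j (start i - s)) <= entry_cap i.
Proof.
  intros hs hj. pose proof (start_add i).
  assert (hs' : (s <= start i)%nat).
  { destruct i as [|i]; simpl in hs; [lia|].
    pose proof (blk_end_le_start_S i). pose proof (start_add i). lia. }
  assert (hbig : mass i / entry_cap i < Cmod (weight_prod a w j (start i - s))).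
  { apply (Cmod_weight_prod_middle_gt a w M j (start i - s) (S i - j + s) (S i) (S i + prev_start i));
      auto; try lia.
    replace (j + (start i - s) + (S i - j + s))%nat with (blk_end i) by lia. apply blk_end_spec. }
  pose proof (entry_cap_pos i). pose proof (Cmod_weight_prod_pos a w ha hw j (start i - s)).
  assert (hEm : Cmod (E i j) <= mass i).
  { destruct (Nat.le_gt_cases j i).
    - apply (sum_n_ge_term (fun j => Cmod (E i j))); auto. intro; apply Cmod_ge_0.
    - rewrite hE, Cmod_0 by auto. apply sum_n_nonneg. intro; apply Cmod_ge_0. }
  rewrite Cmod_div by (apply weight_prod_neq0; auto).
  apply Rmult_le_reg_r with (Cmod (weight_prod a w j (start i - s))); auto.
  unfold Rdiv. rewrite Rmult_assoc, Rinv_l by lra.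
  apply Rmult_lt_compat_l with (r := entry_cap i) in hbig; auto.
  replace (entry_cap i * (mass i / entry_cap i)) with (mass i) in hbig by (field; lra). lra.
Qed.

Let universal_vec (m : nat) : C :=
  sum_n (fun i => (if in_block i m
                   then (E i (m - start i) / weight_prod a w (m - start i) (start i))%C
                   else RtoC 0) : C) m.

Let universal_vec_in_block i m : in_block i m = true ->
  universal_vec m = (E i (m - start i) / weight_prod a w (m - start i) (start i))%C.
Proof.
  intros hb. unfold universal_vec. rewrite (sum_n_single _ i).
  - rewrite hb. reflexivity.
  - intros i' hi'. destruct (in_block i' m) eqn:e; auto.
    exfalso. apply hi'. apply (in_block_unique i' i m); auto.
  - pose proof (start_ge i). unfold in_block in hb.
    destruct (Nat.leb_spec (start i) m); [lia | discriminate].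
Qed.

Let universal_vec_off_blocks m : (forall i, in_block i m = false) -> universal_vec m = 0%C.
Proof. intros h. apply sum_n_zero. intro i. rewrite h. reflexivity. Qed.

Let block_cases (h : nat -> R) s k0 :
  (forall m, (forall i, in_block i (m + s) = false) -> h m = 0) ->
  (forall i m, in_block i (m + s) = true -> h m = 0 \/ ((k0 <= i)%nat /\ h m <= (/2) ^ i / INR (S i))) ->
  (forall m, 0 <= h m) -> ex_series h /\ Series h <= 2 * (/2) ^ k0.
Proof.
  intros hout hin hpos. apply (series_block_bound h start S s k0); auto.
  intro m. destruct (classic (exists i, in_block i (m + s) = true)) as [[i hi]|hn].
  - destruct (hin i m hi) as [e|[hk hle]]; [left; auto|]. right. exists i. repeat split; auto.
    + unfold in_block in hi. destruct (Nat.leb_spec (start i) (m + s)); [auto | discriminate].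
    + unfold in_block in hi. destruct (Nat.ltb_spec (m + s) (start i + S i)), (Nat.leb (start i) (m + s));
        [auto | discriminate..].
  - left. apply hout. intro i. destruct (in_block i (m + s)) eqn:e; auto. exfalso; eauto.
Qed.

Let in_block_bounds i m : in_block i m = true -> (start i <= m < start i + S i)%nat.
Proof.
  unfold in_block. destruct (Nat.leb_spec (start i) m), (Nat.ltb_spec m (start i + S i)); auto; discriminate.
Qed.

Let in_lq_universal_vec : in_lq q universal_vec /\ lq_sum q universal_vec <= 2.
Proof.
  replace 2 with (2 * (/2) ^ 0) by (simpl; ring).
  apply (block_cases _ 0 0); [| |intro; apply rpow_nonneg].
  - intros m hm. rewrite Nat.add_0_r in hm. rewrite universal_vec_off_blocks, Cmod_0 by auto.
    apply rpow_0_l.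
  - intros i m hm. rewrite Nat.add_0_r in hm. right. split; [lia|].
    rewrite (universal_vec_in_block i) by auto. rewrite <- rpow_entry_cap.
    apply rpow_le_compat; [lra|]. split; [apply Cmod_ge_0|].
    pose proof (in_block_bounds i m hm).
    pose proof (entry_le_cap i 0 (m - start i) ltac:(lia) ltac:(lia)) as h.
    rewrite Nat.sub_0_r in h. exact h.
Qed.

Let iter_bshift_universal_vec_near k :
  in_lq q (fun m => Nat.iter (start k) (bshift a w) universal_vec m - E k m)%C /\
  lq_sum q (fun m => Nat.iter (start k) (bshift a w) universal_vec m - E k m)%C
    <= 2 * (/2) ^ (S k).
Proof.
  set (s := start k).
  apply (block_cases _ s (S k)); [| |intro; apply rpow_nonneg].
  - intros m hm. rewrite iter_bshift, universal_vec_off_blocks by exact hm.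
    destruct (Nat.lt_ge_cases m (S k)).
    + specialize (hm k). unfold in_block in hm. fold s in hm.
      destruct (Nat.leb_spec s (m + s)), (Nat.ltb_spec (m + s) (s + S k)); try lia; discriminate.
    + rewrite hE by lia. replace (weight_prod a w m s * 0 - 0)%C with (RtoC 0) by ring.
      rewrite Cmod_0. apply rpow_0_l.
  - intros i m hm. rewrite iter_bshift, Nat.add_comm, (universal_vec_in_block i)
      by (rewrite Nat.add_comm; auto).
    pose proof (in_block_bounds i (m + s) hm) as hb. rewrite (Nat.add_comm s m).
    destruct (Nat.lt_total i k) as [hik|[->|hik]].
    + exfalso. pose proof (blk_end_le_start i k hik). pose proof (start_add i). unfold s in *. lia.
    + left. change (start k) with s. replace (m + s - s)%nat with m by lia.
      replace (weight_prod a w m s * (E k m / weight_prod a w m s) - E k m)%C with (RtoC 0)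
        by (field; apply weight_prod_neq0; auto).
      rewrite Cmod_0. apply rpow_0_l.
    + right. split; [lia|].
      pose proof (blk_end_le_start k i hik) as hki. pose proof (start_add k). fold s in hki.
      rewrite (hE k m) by lia.
      set (j := (m + s - start i)%nat).
      assert (hsplit : weight_prod a w j (start i) =
                       (weight_prod a w j (start i - s) * weight_prod a w m s)%C).
      { rewrite <- (Nat.sub_add s (start i)) at 1 by lia. rewrite weight_prod_add.
        do 2 f_equal. unfold j. lia. }
      rewrite hsplit.
      replace (weight_prod a w m s * (E i j / (weight_prod a w j (start i - s) * weight_prod a w m s)) - 0)%C
        with (E i j / weight_prod a w j (start i - s))%C
        by (field; split; apply weight_prod_neq0; auto).
      rewrite <- rpow_entry_cap. apply rpow_le_compat; [lra|]. split; [apply Cmod_ge_0|].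
      apply entry_le_cap; [apply start_le_prev_start; auto | unfold j; lia].
Qed.

Lemma bshift_universal_vector : exists y, in_lq q y /\ forall k, exists s,
  in_lq q (fun m => Nat.iter s (bshift a w) y m - E k m)%C /\
  lq_sum q (fun m => Nat.iter s (bshift a w) y m - E k m)%C <= 2 * (/2) ^ (S k).
Proof.
  exists universal_vec. split; [apply in_lq_universal_vec|].
  intro k. exists (start k). apply iter_bshift_universal_vec_near.
Qed.

End BlockConstruction.

(** * The dichotomy *)

(* [i] codes a pair [<(d, c), junk>]; the junk component makes every [(d, c)] recur. *)
Definition target (i j : nat) : C :=
  let '(d, c) := Cantor.of_nat (fst (Cantor.of_nat i)) in
  if Nat.leb j i then coded_seq d c j else 0%C.

Lemma target_support i j : (i < j)%nat -> target i j = 0%C.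
Proof.
  intro h. unfold target. destruct (Cantor.of_nat (fst (Cantor.of_nat i))).
  destruct (Nat.leb_spec j i); [lia | auto].
Qed.

Lemma target_cofinal d c N K : (forall j, (N <= j)%nat -> code_seq c j = 0%nat) ->
  exists k, (K <= k)%nat /\ forall j, target k j = coded_seq d c j.
Proof.
  intros hc. exists (Cantor.to_nat (Cantor.to_nat (d, c), (N + K)%nat)).
  pose proof (to_nat_non_decreasing (Cantor.to_nat (d, c)) (N + K)). split; [lia|].
  intro j. unfold target. rewrite cancel_of_to. cbn [fst]. rewrite cancel_of_to.
  destruct (Nat.leb_spec j (Cantor.to_nat (Cantor.to_nat (d, c), (N + K)%nat))); auto.
  unfold coded_seq. rewrite hc, gauss_rat_0 by lia. reflexivity.
Qed.

Lemma weight_prod_unbounded_beyond (a w : nat -> C) :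
  (forall K, exists m, K < Cmod (weight_prod a w 0 m)) ->
  forall K m0, exists m, (m0 <= m)%nat /\ K < Cmod (weight_prod a w 0 m).
Proof.
  intros hu K m0. revert K. induction m0; intro K.
  - destruct (hu K) as [m hm]. exists m. split; [lia | auto].
  - destruct (IHm0 (Rmax K (Cmod (weight_prod a w 0 m0)))) as [m [h1 h2]].
    pose proof (Rmax_l K (Cmod (weight_prod a w 0 m0))).
    pose proof (Rmax_r K (Cmod (weight_prod a w 0 m0))).
    exists m. split; [|lra]. destruct (Nat.eq_dec m m0); [subst; lra | lia].
Qed.

Lemma hypercyclic_of_unbounded_weight_prod (a b w : nat -> C) q M : 0 < q ->
  (forall k, a k <> 0%C) -> (forall k, w k <> 0%C) ->
  1 <= M -> (forall n, Cmod (shift_weight a w n) <= M) -> beta_contractive a b ->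
  (forall K, exists m, K < Cmod (weight_prod a w 0 m)) ->
  hypercyclic_lq q (Fw_adj a b w).
Proof.
  intros hq ha hw hM1 hM hbeta hunb.
  destruct (beta_bounded a b hbeta) as [Bb [hB0 hB]].
  destruct (bshift_universal_vector a w target q M ha hw hq hM1 hM target_support
              (weight_prod_unbounded_beyond a w hunb)) as [y [hy hnear]].
  exists (dual_coords a b y). split; [apply (in_lq_dual_coords q a b hq y Bb); auto|].
  intros v hv eps he.
  set (c2 := rpow 2 q). set (CJ := c2 * (1 + rpow Bb q)). set (delta := rpow eps q).
  assert (hc2 : 0 < c2) by (apply rpow_pos; lra).
  assert (hCJ : 0 < CJ) by (pose proof (rpow_nonneg Bb q); apply Rmult_lt_0_compat; lra).
  assert (hdelta : 0 < delta) by (apply rpow_pos; auto).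
  destruct (coded_seq_dense a b q Bb hq hB0 hB v hv (delta / (2 * c2)))
    as [d [c [N [hc [hin hS]]]]]; [apply Rdiv_lt_0_compat; lra|].
  destruct (pow_lt_1_zero (/2) ltac:(rewrite Rabs_pos_eq; lra) (delta / (2 * c2 * CJ)))
    as [K hK]; [apply Rdiv_lt_0_compat; [lra | apply Rmult_lt_0_compat; lra]|].
  destruct (target_cofinal d c N K hc) as [k [hk htk]].
  destruct (hnear k) as [s [hx hxS]].
  exists s. rewrite (iter_Fw_adj_dual_coords a b w ha (beta_eventually_le_1 a b hbeta) M hM)
    by (apply in_lq_in_c0 with q; auto).
  split; [apply (in_lq_dual_coords q a b hq _ Bb); auto; apply in_lq_iter_bshift with M; auto; lra|].
  destruct (in_lq_dual_coords q a b hq _ Bb hB0 hB hx) as [hJx hJxS].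
  assert (hsmall : lq_sum q (dual_coords a b (fun m => Nat.iter s (bshift a w) y m - target k m)%C)
                   < delta / (2 * c2)).
  { eapply Rle_lt_trans; [exact hJxS|]. fold c2 CJ.
    specialize (hK k hk). rewrite Rabs_pos_eq in hK by (apply pow_le; lra).
    apply Rle_lt_trans with (CJ * (/2) ^ k).
    - apply Rmult_le_compat_l; [lra|]. eapply Rle_trans; [exact hxS | simpl; lra].
    - apply Rmult_lt_compat_l with (r := CJ) in hK; auto.
      replace (CJ * (delta / (2 * c2 * CJ))) with (delta / (2 * c2)) in hK by (field; lra). exact hK. }
  destruct (lq_sum_plus_lt q hq _ _ delta hJx hin hsmall hS) as [hsum hlt].
  replace (fun n => dual_coords a b (Nat.iter s (bshift a w) y) n - v n)%C
    with (fun n => dual_coords a b (fun m => Nat.iter s (bshift a w) y m - target k m) n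
                   + (dual_coords a b (coded_seq d c) n - v n))%C
    by (apply functional_extensionality; intro n; unfold dual_coords; rewrite !htk; ring).
  apply lq_norm_lt; auto.
Qed.

Lemma conjugate_exponent_pos p q : 1 < p -> / p + / q = 1 -> 0 < q.
Proof.
  intros hp hpq. assert (/ p < 1) by (rewrite <- Rinv_1; apply Rinv_lt_contravar; lra).
  assert (0 < / q) by (pose proof (Rinv_0_lt_compat p ltac:(lra)); lra).
  rewrite <- (Rinv_inv q). apply Rinv_0_lt_compat; auto.
Qed.

Open Scope C_scope.

Theorem mainTheorem11 (a b w : nat -> C) (p q : R)
  (ha : forall n, a n <> 0) (hb : forall n, b n <> 0) (hw : forall n, w n <> 0)
  (hR : Rbar_lt (LimSup_seq (fun n => rpow (Cmod (a n) + Cmod (b n)) (/ INR n)))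
                p_infty)
  (hp : (1 < p)%R) (hpq : (/ p + / q = 1)%R)
  (hsup : exists M : R, forall n, (Cmod (w n * a n / a (S n)) <= M)%R)
  (hlim : Rbar_lt (LimSup_seq (fun n => Cmod (b n / a (S n)))) 1%R) :
  ~ hypercyclic_lq q (Fw_adj a b w)
  <->
  (forall u, in_lq q u -> forall n,
     is_lim_seq (fun nu => Cmod (Nat.iter nu (Fw_adj a b w) u n)) 0%R).
Proof.
  (* [hb] and [hR] only make ℓ^p_{a,b} well defined; of [p], only [q > 0] is used. *)
  assert (hq : (0 < q)%R) by (apply conjugate_exponent_pos with p; auto).
  destruct hsup as [M0 hM0].
  assert (hM : forall n, (Cmod (shift_weight a w n) <= Rmax 1 M0)%R)
    by (intro n; eapply Rle_trans; [apply hM0 | apply Rmax_r]).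
  pose proof (beta_contractive_of_limsup a b hlim) as hbeta.
  split; [|apply not_hypercyclic_of_orbits_tend_to_0; auto].
  intro hnot. destruct (classic (forall K, exists m, (K < Cmod (weight_prod a w 0 m))%R)) as [hunb|hbdd].
  - exfalso. apply hnot, (hypercyclic_of_unbounded_weight_prod a b w q (Rmax 1 M0)); auto.
    apply Rmax_l.
  - apply not_all_ex_not in hbdd as [Pm hPm].
    apply (orbits_tend_to_0_of_bounded_weight_prod a b w q (Rmax 1 M0) Pm); auto.
    intro m. apply Rnot_lt_le. intro h. apply hPm. exists m. exact h.
Qed.
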